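(* Let $G$ be a finite cyclic group. Then $g(OD(G))=3$ if and only if $|G|$ is a composite number.
   Context: For a finite group $G$, $o(x)$ denotes the order of $x\in G$. The order-divisor graph $OD(G)$ is the simple undirected graph with vertex set $G$, in which two distinct vertices $x,y$ are adjacent if and only if $o(x)\neq o(y)$ and either $o(x)\mid o(y)$ or $o(y)\mid o(x)$. The girth $g(\Gamma)$ of a graph $\Gamma$ is the length of a shortest cycle in $\Gamma$ (taken to be $0$ if $\Gamma$ has no cycle). *)

From mathcomp Require Import all_boot all_fingroup all_solvable.
Set Implicit Arguments. Unset Strict Implicit. Unset Printing Implicit Defensive.

(* Simple graphs given by a vertex set A : {set T} and an adjacency relation e
   (assumed symmetric and irreflexive, as the order-divisor relation is). *)

Definition has_cycle_len (T : finType) (A : {set T}) (e : rel T) (k : nat) : bool :=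
  (3 <= k)%N && [exists t : k.-tuple T, [&& uniq t, all (mem A) t & path.cycle e t]].

(* Girth: length of a shortest cycle, 0 if there is none.  A cycle has
   distinct vertices, so its length is at most #|A|; we scan 3..#|A|. *)
Definition girth (T : finType) (A : {set T}) (e : rel T) : nat :=
  head 0 [seq k <- iota 3 (#|A| - 2) | has_cycle_len A e k].

Definition od_adj (gT : finGroupType) : rel gT :=
  fun x y => [&& x != y, #[x]%g != #[y]%g & (#[x]%g %| #[y]%g) || (#[y]%g %| #[x]%g)].

Definition composite (n : nat) : bool := (1 < n) && ~~ prime n.

From mathcomp Require Import all_boot all_fingroup all_solvable.
Set Implicit Arguments. Unset Strict Implicit. Unset Printing Implicit Defensive.

(* Adjacent vertices of OD(G) have distinct orders, so a triangle needs three
   distinct element orders forming a divisor chain.  If #|G| is 1 or prime,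
   every element has order 1 or #|G|, and there is no triangle.  If #|G| = n
   is composite and G = <[x]>, then with p the least prime divisor of n the
   elements 1, x^p, x have orders 1 | n/p | n, all distinct: a triangle. *)

Section Girth.

Variables (T : finType) (A : {set T}) (e : rel T).

Lemma girth3P : girth A e = 3 <-> has_cycle_len A e 3.
Proof.
rewrite /girth; split.
  case Ecyc: [seq k <- _ | _] => [|k ks] //= k3.
  have : k \in [seq k <- iota 3 (#|A| - 2) | has_cycle_len A e k].
    by rewrite Ecyc mem_head.
  by rewrite mem_filter k3 => /andP[].
move=> cyc3; have /existsP[t /and3P[ut tA _]] := cyc3.
have A3 : 3 <= #|A|.
  by apply/card_geqP; exists t; split; rewrite ?size_tuple //; apply/allP.
have : 0 < #|A| - 2 by rewrite subn_gt0.
by case: (#|A| - 2) => //= m _; rewrite cyc3.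
Qed.

Hypothesis e_irr : irreflexive e.

Lemma has_cycle_len3P :
  reflect (exists a b c, [/\ [&& a \in A, b \in A & c \in A]
                           & [&& e a b, e b c & e c a]])
          (has_cycle_len A e 3).
Proof.
apply: (iffP existsP) => [[[[|a [|b [|c []]]] //= t3]] | [a [b [c [abcA eabc]]]]].
  rewrite !andbT => /and3P[_ abcA eabc].
  by exists a, b, c; split; rewrite -?andbA.
have neq x y : e x y -> x != y by apply: contraTneq => ->; rewrite e_irr.
exists [tuple a; b; c]; rewrite /= !inE !andbT -!andbA.
case/and3P: eabc => eab ebc eca.
have [ab bc ca] := And3 (neq _ _ eab) (neq _ _ ebc) (neq _ _ eca).
by case/and3P: abcA => -> -> ->; rewrite negb_or ab bc (eq_sym a) ca eab ebc eca.
Qed.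

End Girth.

Section OrderDivisorGraph.

Variable gT : finGroupType.

Lemma od_adj_irr : irreflexive (@od_adj gT).
Proof. by move=> x; rewrite /od_adj eqxx. Qed.

Lemma od_adjC : symmetric (@od_adj gT).
Proof. by move=> x y; rewrite /od_adj eq_sym (eq_sym #[x]%g) orbC. Qed.

Lemma od_adj_order_neq (x y : gT) : od_adj x y -> #[x]%g != #[y]%g.
Proof. by case/and3P. Qed.

Lemma od_adj_dvd_order (x y : gT) :
  #[x]%g %| #[y]%g -> #[x]%g != #[y]%g -> od_adj x y.
Proof.
move=> dvd_xy neq_xy; rewrite /od_adj neq_xy dvd_xy.
by rewrite (contraNneq _ neq_xy) // => ->.
Qed.

Lemma order_trivial_or_full (G : {group gT}) (x : gT) :
  ~~ composite #|G| -> x \in G -> (#[x]%g == 1) || (#[x]%g == #|G|).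
Proof.
move=> not_comp xG; have dvd_xG := order_dvdG xG.
move: not_comp; rewrite /composite negb_and -leqNgt negbK.
case/orP=> [G_le1 | /primeP[_ /(_ _ dvd_xG)] //].
have G1 : #|G| = 1 by apply/eqP; rewrite eqn_leq G_le1 cardG_gt0.
by move: dvd_xG; rewrite G1 dvdn1 => ->.
Qed.

Lemma no_od_triangle (G : {group gT}) (a b c : gT) :
  ~~ composite #|G| -> [&& a \in G, b \in G & c \in G] ->
  ~~ [&& od_adj a b, od_adj b c & od_adj c a].
Proof.
move=> not_comp /and3P[aG bG cG].
apply/negP => /and3P[/od_adj_order_neq + /od_adj_order_neq + /od_adj_order_neq].
move: (order_trivial_or_full not_comp aG) (order_trivial_or_full not_comp bG).
move: (order_trivial_or_full not_comp cG).
by do 3!case/orP=> /eqP->; rewrite ?eqxx.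
Qed.

Lemma cyclic_composite_od_triangle (G : {group gT}) :
  cyclic G -> composite #|G| ->
  exists a b c, [/\ [&& a \in G, b \in G & c \in G]
                  & [&& od_adj a b, od_adj b c & od_adj c a]].
Proof.
case/cyclicP=> x defG /andP[n_gt1 n_nprime].
have xG : x \in G by rewrite defG cycle_id.
have ox : #[x]%g = #|G| by rewrite defG.
set n := #|G| in n_gt1 n_nprime ox *; set p := pdiv n.
have p_dvd_n : p %| n by apply: pdiv_dvd.
have p_gt1 : 1 < p by apply/prime_gt1/pdiv_prime.
have p_lt_n : p < n.
  rewrite ltn_neqAle pdiv_leq 1?ltnW // andbT.
  by apply: contraNneq n_nprime => <-; apply: pdiv_prime.
have oxp : #[(x ^+ p)%g]%g = n %/ p by rewrite orderXdiv ox.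
have q_gt1 : 1 < n %/ p by rewrite ltn_divRL // mul1n.
have q_lt_n : n %/ p < n by rewrite ltn_Pdiv // ltnW.
exists 1%g, (x ^+ p)%g, x; split; first by rewrite group1 groupX.
rewrite od_adj_dvd_order ?order1 ?dvd1n ?oxp ?(ltn_eqF q_gt1) //=.
rewrite od_adj_dvd_order ?oxp ?ox ?dvdn_div ?(ltn_eqF q_lt_n) //=.
by rewrite od_adjC od_adj_dvd_order ?order1 ?dvd1n ?ox ?(ltn_eqF n_gt1).
Qed.

End OrderDivisorGraph.

Theorem mainTheorem5 (gT : finGroupType) (G : {group gT}) :
  cyclic G -> (girth G (@od_adj gT) = 3 <-> composite #|G|).
Proof.
have triangleP := has_cycle_len3P G (@od_adj_irr gT).
move=> cycG; split=> [/girth3P/triangleP [a [b [c [abcG triangle]]]] | comp].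
  by apply: contraTT triangle => not_comp; apply: no_od_triangle not_comp abcG.
exact/girth3P/triangleP/cyclic_composite_od_triangle.
Qed.
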